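(* Let $t$ be a positive integer and $i\in\{1,\ldots,t\}$. Then there exist a positive integer $k$ and matrices $A,M,N,B\in\mathbb{Z}^{k\times k}_{\rm uptr}$ such that \[AM^{a_1}NM^{a_2}N\cdots NM^{a_t}B=a_iE_k\] for all nonnegative integers $a_1,\ldots,a_t$ (the product contains $t-1$ factors $N$).
   Context: $\mathbb{Z}^{k\times k}_{\rm uptr}$ is the set of upper-triangular $k\times k$ integer matrices. $E_k$ denotes the $k\times k$ matrix whose only nonzero entry is the entry in row $1$, column $k$, equal to $1$. *)

From mathcomp Require Import all_boot all_order all_algebra.
Set Implicit Arguments. Unset Strict Implicit. Unset Printing Implicit Defensive.
Import GRing.Theory.
Local Open Scope ring_scope.

Definition upper_tri (n : nat) (A : 'M[int]_n) : Prop :=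
  forall i j : 'I_n, (j < i)%N -> A i j = 0.

(* E_k : the k x k matrix with a single 1 in row 1, column k (k = n.+1). *)
Definition Ek (n : nat) : 'M[int]_n.+1 := delta_mx ord0 ord_max.

(* The word M^{a_1} N M^{a_2} N ... N M^{a_t}, as an ordered product
   over j < t of (N if j > 0, else 1) * M^{a_j}. *)
Definition word (n t : nat) (M N : 'M[int]_n.+1) (a : 'I_t -> nat) : 'M[int]_n.+1 :=
  \prod_(j < t) ((if j == 0%N :> nat then 1 else N) * M ^+ a j).

From mathcomp Require Import all_boot all_order all_algebra zify.
Local Open Scope ring_scope.
Import GRing.Theory.

(* In dimension k = 2t the basis vectors form two chains e_0, ..., e_{t-1} and
   e_t, ..., e_{2t-1}.  N moves every e_c one step along its chain and kills
   e_{t-1}, so the chains never mix, while M = 1 + E_{i,t+i} fixes every e_c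
   except e_i, which it sends to e_i + e_{t+i}.  Reading the word from the
   left on e_0, after the first s+1 blocks one has
   e_s + [i <= s] a_i e_{t+s}: the first chain counts the blocks and the
   second one stores a_i, picked up in block i.  So the corner entry (0, k-1)
   of the word is a_i, which A = E_{0,0} and B = E_{k-1,k-1} cut out. *)

Lemma mulmxMnl (R : pzSemiRingType) m n p (A : 'M[R]_(m, n)) (B : 'M_(n, p)) k :
  A *+ k *m B = (A *m B) *+ k.
Proof. exact: (raddfMn (mulmxr B)). Qed.

Lemma exprD1n_sqr0 (R : pzRingType) (x : R) k : x * x = 0 -> (1 + x) ^+ k = 1 + x *+ k.
Proof.
move=> xx0; elim: k => [|k IHk]; first by rewrite expr0 mulr0n addr0.
by rewrite exprS IHk mulrDl mul1r mulrDr mulr1 mulrnAr xx0 mul0rn addr0 -addrA -mulrSr.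
Qed.

Lemma mulmx_delta_mx (R : pzSemiRingType) m n p q (W : 'M[R]_(n, p))
    (i : 'I_m) (j : 'I_n) (k : 'I_p) (l : 'I_q) :
  delta_mx i j *m W *m delta_mx k l = W j k *: delta_mx i l.
Proof.
apply/matrixP => x y; rewrite !mxE (bigD1 k) //= big1 => [|z zk]; last first.
  by rewrite !mxE (negbTE zk) mulr0.
rewrite !mxE (bigD1 j) //= big1 => [|z zj]; last by rewrite !mxE (negbTE zj) andbF mul0r.
rewrite !mxE !eqxx !addr0 /=.
by case: (x == i); case: (y == l); rewrite /= ?mul1r ?mulr1 ?mul0r ?mulr0.
Qed.

Lemma upper_triD n (A B : 'M[int]_n) : upper_tri A -> upper_tri B -> upper_tri (A + B).
Proof. by move=> hA hB r c cr; rewrite mxE hA ?hB ?addr0. Qed.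

Lemma upper_tri1 n : upper_tri (1%:M : 'M[int]_n).
Proof. by move=> r c cr; rewrite mxE; case: eqP => // rc; rewrite rc ltnn in cr. Qed.

Lemma upper_tri_delta_mx n (p q : 'I_n) : (p <= q)%N -> upper_tri (delta_mx p q).
Proof.
move=> pq r c cr; rewrite mxE; case: eqP => [rp|] //; case: eqP => [cq|] //.
by move: cr; rewrite rp cq ltnNge pq.
Qed.

Definition shift_cut (n T : nat) : 'M[int]_n.+1 :=
  \matrix_(r, c) (((c == r.+1 :> nat) && (c != T :> nat)) : nat)%:R.

Lemma upper_tri_shift_cut n T : upper_tri (shift_cut n T).
Proof. by move=> r c cr; rewrite mxE; case: eqP => // c_r; rewrite c_r ltnNge leqnSn in cr. Qed.

Definition transvection (n p q : nat) : 'M[int]_n.+1 := 1 + delta_mx (inord p) (inord q).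

Lemma upper_tri_transvection n p q : (p <= q)%N -> (q <= n)%N -> upper_tri (transvection n p q).
Proof.
move=> pq qn; apply: upper_triD; first exact: upper_tri1.
by apply: upper_tri_delta_mx; rewrite !inordK // ltnS (leq_trans pq).
Qed.

Section UnitRows.

Variable n : nat.
Local Notation e c := ('e_(inord c) : 'rV[int]_n.+1).

Lemma erow_shift_cut T c : (c < n)%N -> e c *m shift_cut n T = e c.+1 *+ (c.+1 != T).
Proof.
move=> cn; apply/rowP => j; rewrite -rowE !mxE mulmxnE mxE eqxx.
rewrite -(inj_eq val_inj) /= !inordK ?ltnS ?(ltnW cn) //.
by case: eqP => [->|_]; case: (c.+1 != T).
Qed.

Lemma erow_exp_transvection p q c a : (c <= n)%N -> (p <= n)%N -> (q <= n)%N -> p != q ->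
  e c *m transvection n p q ^+ a = e c + e q *+ ((c == p) * a).
Proof.
move=> cn pn qn pq; rewrite /transvection.
have inj x y : (x <= n)%N -> (y <= n)%N -> (inord x == inord y :> 'I_n.+1) = (x == y).
  by move=> xn yn; rewrite -(inj_eq val_inj) /= !inordK.
have sqr0 : delta_mx (inord p) (inord q) * delta_mx (inord p) (inord q) = 0 :> 'M[int]_n.+1.
  by rewrite -mulmxE mul_delta_mx_0 // inj // eq_sym.
by rewrite exprD1n_sqr0 // mulmxDr mulmx1 raddfMn /= mul_delta_mx_cond inj // -mulrnA mulnC.
Qed.

End UnitRows.

Lemma word_nat n t (M N : 'M[int]_n.+1) (a : 'I_t.+1 -> nat) :
  word M N a = \prod_(0 <= j < t.+1) ((if j == 0%N then 1 else N) * M ^+ a (inord j)).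
Proof. by rewrite big_mkord; apply: eq_bigr => j _; rewrite inord_val. Qed.

Section Construction.

Variables (t' i : nat).
Hypothesis i_le : (i <= t')%N.
Local Notation T := t'.+1.
Local Notation n := (T + t')%N.
Local Notation e c := ('e_(inord c) : 'rV[int]_n.+1).
Local Notation M := (transvection n i (T + i)).
Local Notation N := (shift_cut n T).

Lemma erow_prefix (b : nat -> nat) s : (s <= t')%N ->
  e 0 *m \prod_(0 <= j < s.+1) ((if j == 0%N then 1 else N) * M ^+ b j)
  = e s + e (T + s) *+ ((i <= s) * b i).
Proof.
elim: s => [_|s IHs s_lt].
  rewrite big_nat1 mul1r erow_exp_transvection; try lia.
  case: (posnP i) => [->|i_gt0]; first by rewrite addn0.
  by rewrite eq_sym (gtn_eqF i_gt0) leqNgt i_gt0.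
rewrite big_nat_recr //= -mulmxE mulmxA IHs ?(ltnW s_lt) //.
rewrite mulmxA mulmxDl mulmxMnl !erow_shift_cut; try lia.
have -> : (s.+1 != T) by rewrite eqSS neq_ltn s_lt.
have -> : ((T + s).+1 != T) by rewrite -addnS -{2}[T]addn0 eqn_add2l.
rewrite !mulr1n -[(T + s).+1]addnS mulmxDl mulmxMnl !erow_exp_transvection; try lia.
have -> : (T + s.+1 == i) = false by lia.
rewrite mul0n mulr0n addr0 -addrA; congr (_ + _).
case: (eqVneq s.+1 i) => [<-|ne]; first by rewrite ltnn ltnSn !mulnbl mulr0n addr0.
by rewrite !mulnbl mulr0n add0r [(i <= s.+1)%N]leq_eqVlt ltnS eq_sym (negbTE ne).
Qed.

Lemma prefix_corner (b : nat -> nat) :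
  (\prod_(0 <= j < T) ((if j == 0%N then 1 else N) * M ^+ b j)) 0 ord_max = (b i)%:Z.
Proof.
have inord0 : inord 0 = 0 :> 'I_n.+1 by apply: val_inj; rewrite /= inordK.
have := congr1 (fun v : 'rV[int]_n.+1 => v 0 ord_max) (erow_prefix b t' (leqnn t')).
rewrite /= -rowE mxE inord0 => ->.
rewrite !mxE mulmxnE mxE eqxx -!(inj_eq val_inj) /= !inordK ?ltnS ?leq_addl //.
rewrite eqxx i_le mul1n gtn_eqF; last lia.
by rewrite mulr0n add0r mulr1n natz.
Qed.

End Construction.

Theorem lemma4p1 (t : nat) (i : 'I_t) :
  exists (n : nat) (A M N B : 'M[int]_n.+1),
    [/\ upper_tri A, upper_tri M, upper_tri N, upper_tri B &
      forall a : 'I_t -> nat,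
        A * word M N a * B = (a i)%:Z *: Ek n].
Proof.
case: t i => [|t'] i; first by case: i.
have i_le : (i <= t')%N by rewrite -ltnS.
exists (t'.+1 + t')%N, (delta_mx 0 0), (transvection _ i (t'.+1 + i)),
  (shift_cut _ t'.+1), (delta_mx ord_max ord_max).
split.
- exact: upper_tri_delta_mx.
- by apply: upper_tri_transvection; rewrite ?leq_addl ?leq_add2l.
- exact: upper_tri_shift_cut.
- exact: upper_tri_delta_mx.
move=> a; rewrite -!mulmxE mulmx_delta_mx word_nat.
by rewrite prefix_corner // inord_val.
Qed.
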